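(* Consider a population of users $1,\dots,n$ with intervals $[l_i,r_i]$, speech points $p_i\in[l_i,r_i]$, common disutility $b:=b_1=\dots=b_n\ge0$ and common personalization parameter $\lambda:=\lambda_1=\dots=\lambda_n\in[0,1]$, in which compatibility is mutual: for all $i,j$, $p_j\in[l_i,r_i]$ implies $p_i\in[l_j,r_j]$. Then for any initial set of users on the platform and any starvation-free switching order, the platform reaches an equilibrium: there is a time $T$ after which the set of users on the platform never changes (and this set is stable).
   Context: For $\mathcal S\subseteq[n]$, user $i$'s utility is $u_i(\mathcal S)=\sum_{j\in\mathcal S\setminus\{i\}}\big(\mathbf 1[p_j\in[l_i,r_i]]-\lambda b\,\mathbf 1[p_j\notin[l_i,r_i]]\big)$. The platform (with no moderation) starts from some initial set of users; a switching order $\sigma:\mathbb Z_{>0}\to[n]$ is starvation-free if every user appears at infinitely many times. At time $t$, user $\sigma(t)$ is on the platform after step $t$ iff $u_{\sigma(t)}(\mathcal W)\ge0$, where $\mathcal W$ is the current set of users on the platform; all other users keep their status. A set $\mathcal S$ is stable if $u_i(\mathcal S)\ge0$ for all $i\in\mathcal S$ and $u_j(\mathcal S)<0$ for all $j\notin\mathcal S$. *)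

From HB Require Import structures.
From mathcomp Require Import all_boot all_order all_algebra.
Set Implicit Arguments. Unset Strict Implicit. Unset Printing Implicit Defensive.
Import Order.TTheory GRing.Theory Num.Theory.
Local Open Scope ring_scope.

Section Platform.
Variables (R : realFieldType) (n : nat).
Variables (l r p : 'I_n -> R) (lam b : R).

Definition compat (i j : 'I_n) : bool := (l i <= p j) && (p j <= r i).

Definition utility (i : 'I_n) (S : {set 'I_n}) : R :=
  \sum_(j in S :\ i) ((compat i j)%:R - lam * b * (~~ compat i j)%:R).

Definition step (k : 'I_n) (W : {set 'I_n}) : {set 'I_n} :=
  if 0 <= utility k W then k |: W else W :\ k.

(* Set of users on the platform after step t (times t = 1, 2, ...);
   traj 0 is the initial set; sigma 0 is never used. *)
Fixpoint traj (S0 : {set 'I_n}) (sigma : nat -> 'I_n) (t : nat) : {set 'I_n} :=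
  match t with
  | 0 => S0
  | t'.+1 => step (sigma t'.+1) (traj S0 sigma t')
  end.

Definition starvation_free (sigma : nat -> 'I_n) : Prop :=
  forall (i : 'I_n) (t : nat), exists t', (t < t')%N /\ sigma t' = i.

Definition stable (S : {set 'I_n}) : Prop :=
  (forall i, i \in S -> 0 <= utility i S) /\
  (forall j, j \notin S -> utility j S < 0).

End Platform.

From mathcomp Require Import all_boot all_order all_algebra.
From Stdlib Require Import Classical.
From mathcomp Require Import zify.
Set Implicit Arguments. Unset Strict Implicit. Unset Printing Implicit Defensive.
Import Order.TTheory GRing.Theory Num.Theory.
Local Open Scope ring_scope.

(* Mutual compatibility makes the pairwise affinity w(i, j) symmetric, so the
   game has the potential Phi(S) = sum_(i in S) u_i(S), which changes by
   2 u_k(S) when k joins S.  Every effective switch therefore strictly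
   increases (Phi(S), |S|) in the lexicographic order (a user joining with
   utility 0 leaves Phi unchanged but enlarges S).  There are finitely many
   sets, so the trajectory is eventually constant, and since every user moves
   again later, the limit is a fixed point of every user's switch, i.e. a
   stable set. *)

Lemma nondecreasing_bounded_stationary (f : nat -> nat) (B : nat) :
  (forall t, f t <= f t.+1)%N -> (forall t, f t <= B)%N ->
  exists T, forall t, (T <= t)%N -> f t = f T.
Proof.
move=> f_incr f_bnd; have f_homo := homo_leq leqnn (@leq_trans) f_incr.
pose t0 := 0%N; have [m] := ubnP (B - f t0); clearbody t0.
elim: m t0 => // m IH t0 lt_m.
case: (classic (exists t, (t0 <= t)%N /\ (f t0 < f t)%N)) => [[t [_ lt_f]]|].
  by apply: (IH t); have := f_bnd t; lia.
move=> no_incr; exists t0 => t le_t0t.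
apply/eqP; rewrite eqn_leq (f_homo _ _ le_t0t) andbT.
by rewrite leqNgt; apply/negP => lt_f; apply: no_incr; exists t.
Qed.

Lemma progress_stationary (A : finType) (d : Order.disp_t) (K : preorderType d)
    (key : A -> K) (x : nat -> A) :
  (forall t, x t.+1 = x t \/ (key (x t) < key (x t.+1))%O) ->
  exists T, forall t, (T <= t)%N -> x t = x T.
Proof.
move=> x_step; pose rank a := #|[set c | (key c < key a)%O]|.
have rank_lt a c : (key a < key c)%O -> (rank a < rank c)%N.
  move=> lt_ac; apply: proper_card; apply/properP; split.
    by apply/subsetP => e; rewrite !inE => /lt_trans; apply.
  by exists a; rewrite !inE ?ltxx.
have [T rankT] : exists T, forall t, (T <= t)%N -> rank (x t) = rank (x T).
  apply: (@nondecreasing_bounded_stationary _ #|A|) => [t|t].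
    by case: (x_step t) => [->|/rank_lt/ltnW].
  exact: max_card.
exists T; elim=> [|t IH]; first by rewrite leqn0 => /eqP->.
rewrite leq_eqVlt => /predU1P[<- //|]; rewrite ltnS => le_Tt.
case: (x_step t) => [->|/rank_lt]; first exact: IH.
by rewrite !rankT ?ltnn // (leq_trans le_Tt).
Qed.

Section PotentialGame.
Variables (R : realFieldType) (T : finType) (w : T -> T -> R).

Definition gain (i : T) (S : {set T}) : R := \sum_(j in S :\ i) w i j.

Definition respond (k : T) (S : {set T}) : {set T} :=
  if 0 <= gain k S then k |: S else S :\ k.

Definition potential (S : {set T}) : R := \sum_(i in S) gain i S.

Definition potential_key (S : {set T}) : R *l nat := (potential S, #|S|).

Lemma gain_notin (k : T) (S : {set T}) :
  k \notin S -> gain k S = \sum_(j in S) w k j.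
Proof. by move=> kS; rewrite /gain (setDidPl _) // disjoint_sym disjoints1. Qed.

Lemma gainD1 (k : T) (S : {set T}) : gain k (S :\ k) = gain k S.
Proof. by rewrite /gain setDDl setUid. Qed.

Lemma gainU1 (i k : T) (S : {set T}) :
  i != k -> k \notin S -> gain i (k |: S) = w i k + gain i S.
Proof.
move=> ik kS; rewrite /gain -big_setU1 /=; last by rewrite !inE negb_and kS orbT.
apply: eq_bigl => j; rewrite !inE.
by case: (eqVneq j k) => [->|_] //=; rewrite andbT eq_sym.
Qed.

Lemma respond_fixed (k : T) (S : {set T}) :
  respond k S = S -> (k \in S) = (0 <= gain k S).
Proof. by rewrite /respond; case: ifP => _ fixed; rewrite -{1}fixed !inE eqxx. Qed.

Hypothesis w_sym : forall i j, w i j = w j i.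

Lemma potentialU1 (k : T) (S : {set T}) :
  k \notin S -> potential (k |: S) = potential S + gain k S *+ 2.
Proof.
move=> kS; rewrite /potential big_setU1 //= {1}/gain setU1K //.
rewrite [\sum_(i in S) gain i _](eq_bigr (fun i => w k i + gain i S)); last first.
  move=> i iS; have ik : i != k by apply: contraNneq kS => <-.
  by rewrite gainU1 // w_sym.
by rewrite big_split /= -gain_notin // addrA mulr2n addrC.
Qed.

Lemma respond_progress (k : T) (S : {set T}) :
  respond k S = S \/ (potential_key S < potential_key (respond k S))%O.
Proof.
rewrite /respond /potential_key.
case: ifP => gain_ge0; case: (boolP (k \in S)) => kS.
- by left; apply/setUidPr; rewrite sub1set.
- right; rewrite ltEprodlexi /= potentialU1 // lerDl mulrn_wge0 //.
  by apply/implyP => _; rewrite cardsU1 kS; exact: ltnSn.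
- right; have kSk : k \notin S :\ k by rewrite !inE eqxx.
  have lt_pot : potential S < potential (S :\ k).
    rewrite -{1}(setD1K kS) potentialU1 // gainD1 gtrDl pmulrn_llt0 //.
    by rewrite ltNge gain_ge0.
  by rewrite ltEprodlexi /= (ltW lt_pot) leNgt lt_pot.
- by left; apply/setDidPl; rewrite disjoint_sym disjoints1.
Qed.

End PotentialGame.

Section Platform.
Variables (R : realFieldType) (n : nat) (l r p : 'I_n -> R) (lam b : R).

Definition affinity (i j : 'I_n) : R :=
  (compat l r p i j)%:R - lam * b * (~~ compat l r p i j)%:R.

Lemma affinity_sym :
  (forall i j, compat l r p i j -> compat l r p j i) ->
  forall i j, affinity i j = affinity j i.
Proof.
move=> mutual i j; rewrite /affinity.
by have -> : compat l r p i j = compat l r p j i by apply/idP/idP => /mutual.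
Qed.

Lemma trajS (S0 : {set 'I_n}) (sigma : nat -> 'I_n) (t : nat) :
  traj l r p lam b S0 sigma t.+1 =
    respond affinity (sigma t.+1) (traj l r p lam b S0 sigma t).
Proof. by []. Qed.

Lemma stationary_traj_fixed (S0 : {set 'I_n}) (sigma : nat -> 'I_n) (T : nat) :
  starvation_free sigma ->
  (forall t, (T <= t)%N ->
     traj l r p lam b S0 sigma t = traj l r p lam b S0 sigma T) ->
  forall k, respond affinity k (traj l r p lam b S0 sigma T) =
            traj l r p lam b S0 sigma T.
Proof.
move=> sf trajT k; have [[|t] [lt_Tt <-]] := sf k T; first by [].
by rewrite -{1}(trajT t) // -trajS trajT // ltnW.
Qed.

Lemma respond_fixed_stable (S : {set 'I_n}) :
  (forall k, respond affinity k S = S) -> stable l r p lam b S.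
Proof.
move=> fixed; split=> [i|j]; first by rewrite (respond_fixed (fixed i)).
by rewrite (respond_fixed (fixed j)) ltNge.
Qed.

End Platform.

Theorem proposition13 (R : realFieldType) (n : nat) (l r p : 'I_n -> R) (lam b : R)
  (hb : 0 <= b) (hlam0 : 0 <= lam) (hlam1 : lam <= 1)
  (hp : forall i, l i <= p i <= r i)
  (hmut : forall i j, compat l r p i j -> compat l r p j i)
  (S0 : {set 'I_n}) (sigma : nat -> 'I_n)
  (hsf : starvation_free sigma) :
  exists (T : nat) (S : {set 'I_n}),
    (forall t, (T <= t)%N -> traj l r p lam b S0 sigma t = S) /\
    stable l r p lam b S.
Proof.
have w_sym := affinity_sym lam b hmut.
have [T trajT] := progress_stationary (key := potential_key (affinity l r p lam b))
  (x := traj l r p lam b S0 sigma) (fun t => respond_progress w_sym _ _).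
exists T, (traj l r p lam b S0 sigma T); split; first exact: trajT.
exact/respond_fixed_stable/stationary_traj_fixed.
Qed.
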